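(* Let $p\ge5$ be a prime. Every finite subgroup of $\mathrm{D}(p,\mathbb{C})$ that is invariant under conjugation by $\mathrm{Alt}(p)$ is invariant under conjugation by $\mathrm{Sym}(p)$.
   Context: $\mathrm{D}(p,\mathbb{C})$ is the group of invertible diagonal $p\times p$ matrices; $\mathrm{Sym}(p)$ is identified with the group of permutation matrices via $\alpha\mapsto[\delta_{i\alpha,j}]_{i,j}$, and $\mathrm{Alt}(p)$ with its subgroup of even permutations. *)

From mathcomp Require Import all_boot all_order all_algebra all_fingroup.
From mathcomp Require Import reals.
From mathcomp.real_closed Require Import complex.
Set Implicit Arguments. Unset Strict Implicit. Unset Printing Implicit Defensive.
Import GRing.Theory Num.Theory.
Local Open Scope ring_scope.

Definition is_invdiag (C : fieldType) (p : nat) (A : 'M[C]_p) : bool :=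
  is_diag_mx A && (A \in unitmx).

Definition finite_subgroup_of_diag (C : fieldType) (p : nat) (H : seq 'M[C]_p) : Prop :=
  [/\ (forall A, A \in H -> is_invdiag A),
      1%:M \in H,
      (forall A B, A \in H -> B \in H -> A *m B \in H) &
      (forall A, A \in H -> invmx A \in H)].

(* H is invariant under conjugation by the permutation matrix of s
   (perm_mx s = [delta_{s i, j}]_{i,j}). *)
Definition conj_invariant (C : fieldType) (p : nat) (H : seq 'M[C]_p) (s : 'S_p) : Prop :=
  forall A, A \in H -> invmx (perm_mx s) *m A *m perm_mx s \in H.

From mathcomp Require Import all_boot all_order all_algebra all_fingroup.
From mathcomp Require Import reals.
From mathcomp.real_closed Require Import complex.
From mathcomp Require Import ring.
Set Implicit Arguments. Unset Strict Implicit. Unset Printing Implicit Defensive.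
Import GRing.Theory.
Local Open Scope ring_scope.

(* Let tau = (a b) and let k, l, m be three further points; conjugating a
   diagonal A by a permutation s permutes its diagonal entries.  For A in H
   take the 3-cycles s1 on {a, k, l} and s2 on {b, k, l} and split
   A = y1 y2 z with y1 = A / s1(A) and y2 = A / s2(A); all three lie in H by
   Alt-invariance.  y1 has entry 1 at both b and m, so it is fixed by (b m) and
   its tau-conjugate is its conjugate by the even permutation (b m) tau;
   likewise for y2 with (a m).  As s1 and s2 send k to a and b respectively,
   z has the entry A_kk at both a and b, so it is fixed by tau.  Hence the
   tau-conjugate of A lies in H, and every odd permutation is tau followed by
   an even one. *)

Section PermConj.
Variables (C : fieldType) (n : nat).
Implicit Types (A B : 'M[C]_n) (s t : 'S_n).

Definition perm_conj s A := invmx (perm_mx s) *m A *m perm_mx s.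

Lemma invmx_perm_mx s : invmx (perm_mx s) = perm_mx (s^-1)%g :> 'M[C]_n.
Proof.
by rewrite -[RHS](mulKmx (unitmx_perm C s)) -perm_mxM mulgV perm_mx1 mulmx1.
Qed.

Lemma perm_conjE s A i j : perm_conj s A i j = A ((s^-1)%g i) ((s^-1)%g j).
Proof.
by rewrite /perm_conj invmx_perm_mx -row_permE -{2}[s](invgK) -col_permE !mxE.
Qed.

Lemma perm_conjM s t A : perm_conj t (perm_conj s A) = perm_conj (s * t)%g A.
Proof. by apply/matrixP => i j; rewrite !perm_conjE invMg !permM. Qed.

Lemma perm_conj_mulmx s A B :
  perm_conj s (A *m B) = perm_conj s A *m perm_conj s B.
Proof. by rewrite /perm_conj !mulmxA mulmxK ?unitmx_perm. Qed.

Lemma perm_conj_diag s A : is_diag_mx A -> is_diag_mx (perm_conj s A).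
Proof.
move=> /is_diag_mxP A_diag; apply/is_diag_mxP => i j neq_ij.
by rewrite perm_conjE A_diag // val_eqE (inj_eq perm_inj).
Qed.

Lemma eq_diag_mx A B :
  is_diag_mx A -> is_diag_mx B -> (forall i, A i i = B i i) -> A = B.
Proof.
move=> /is_diag_mxP A_diag /is_diag_mxP B_diag eq_AB; apply/matrixP => i j.
by have [->|neq_ij] := eqVneq i j; rewrite ?eq_AB // A_diag ?B_diag.
Qed.

Lemma diag_mulmx_ii A B i : is_diag_mx A -> (A *m B) i i = A i i * B i i.
Proof.
move=> /is_diag_mxP A_diag; rewrite mxE (bigD1 i) //= big1 ?addr0 // => j neq_ji.
by rewrite A_diag ?mul0r // val_eqE eq_sym.
Qed.

Lemma diag_invmx_ii A i :
  is_diag_mx A -> A \in unitmx -> A i i * invmx A i i = 1.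
Proof. by move=> A_diag A_unit; rewrite -diag_mulmx_ii // mulmxV // mxE eqxx. Qed.

Lemma perm_conj_tperm_id A i j :
  is_diag_mx A -> A i i = A j j -> perm_conj (tperm i j) A = A.
Proof.
move=> A_diag eq_ij; apply: eq_diag_mx => // [|x]; first exact: perm_conj_diag.
by rewrite perm_conjE tpermV; case: tpermP => [->|->|] //; rewrite eq_ij.
Qed.

End PermConj.

Section AltInvariantDiagonal.
Variables (C : fieldType) (n : nat) (H : seq 'M[C]_n).
Hypothesis H_sub : finite_subgroup_of_diag H.
Hypothesis H_alt : forall s : 'S_n, ~~ odd_perm s -> conj_invariant H s.
Implicit Types (A B : 'M[C]_n) (s : 'S_n).

Lemma mem_diag A : A \in H -> is_diag_mx A.
Proof. by case: H_sub => H_diag _ _ _ /H_diag /andP[]. Qed.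

Lemma mem_unitmx A : A \in H -> A \in unitmx.
Proof. by case: H_sub => H_diag _ _ _ /H_diag /andP[]. Qed.

Lemma mem_mulmx A B : A \in H -> B \in H -> A *m B \in H.
Proof. by case: H_sub => _ _ H_mul _; apply: H_mul. Qed.

Lemma mem_invmx A : A \in H -> invmx A \in H.
Proof. by case: H_sub => _ _ _ H_inv; apply: H_inv. Qed.

Lemma mem_perm_conj s A : ~~ odd_perm s -> A \in H -> perm_conj s A \in H.
Proof. by move=> s_even; apply: H_alt. Qed.

Lemma mulmx_ii A B i : A \in H -> (A *m B) i i = A i i * B i i.
Proof. by move=> HA; rewrite diag_mulmx_ii ?mem_diag. Qed.

Lemma invmx_ii A i : A \in H -> invmx A i i = (A i i)^-1.
Proof.
by move=> HA; rewrite (mulr1_eq (diag_invmx_ii _ _ _)) ?mem_diag ?mem_unitmx.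
Qed.

Lemma diag_neq0 A i : A \in H -> A i i != 0.
Proof.
move=> HA; apply: contra_eqN (diag_invmx_ii i (mem_diag HA) (mem_unitmx HA)).
by move/eqP->; rewrite mul0r eq_sym oner_neq0.
Qed.

Definition conj_quot s A := A *m invmx (perm_conj s A).

Lemma mem_conj_quot s A : ~~ odd_perm s -> A \in H -> conj_quot s A \in H.
Proof. by move=> s_even HA; rewrite mem_mulmx ?mem_invmx ?mem_perm_conj. Qed.

Lemma conj_quot_ii s A i :
  ~~ odd_perm s -> A \in H ->
  conj_quot s A i i = A i i / A ((s^-1)%g i) ((s^-1)%g i).
Proof.
by move=> s_even HA; rewrite mulmx_ii // invmx_ii ?perm_conjE ?mem_perm_conj.
Qed.

Lemma conj_quot_fixed s A i :
  ~~ odd_perm s -> A \in H -> (s^-1)%g i = i -> conj_quot s A i i = 1.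
Proof. by move=> s_even HA si; rewrite conj_quot_ii // si divff ?diag_neq0. Qed.

Lemma mem_tperm_conj_mulmx (a b : 'I_n) A B :
  perm_conj (tperm a b) A \in H -> perm_conj (tperm a b) B \in H ->
  perm_conj (tperm a b) (A *m B) \in H.
Proof. by rewrite perm_conj_mulmx; apply: mem_mulmx. Qed.

Lemma mem_tperm_conj_eq (a b m : 'I_n) A :
  a != b -> b != m -> A \in H -> A b b = A m m ->
  perm_conj (tperm a b) A \in H.
Proof.
move=> neq_ab neq_bm HA eq_bm.
rewrite -(perm_conj_tperm_id (mem_diag HA) eq_bm) perm_conjM mem_perm_conj //.
by rewrite odd_permM !odd_tperm neq_ab neq_bm.
Qed.

Lemma mem_tperm_conj (a b k l m : 'I_n) A : A \in H ->
  a != b -> a != k -> a != l -> a != m -> b != k -> b != l -> b != m ->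
  k != l -> k != m -> l != m -> perm_conj (tperm a b) A \in H.
Proof.
move=> HA ab ak al am bk bl bm kl km lm.
set s1 := (tperm a k * tperm k l)%g; set s2 := (tperm b k * tperm k l)%g.
have s1_even : ~~ odd_perm s1 by rewrite odd_permM !odd_tperm ak kl.
have s2_even : ~~ odd_perm s2 by rewrite odd_permM !odd_tperm bk kl.
have s1V x : (s1^-1)%g x = tperm a k (tperm k l x)
  by rewrite invMg !tpermV permM.
have s2V x : (s2^-1)%g x = tperm b k (tperm k l x)
  by rewrite invMg !tpermV permM.
have s1a : (s1^-1)%g a = k by rewrite s1V (tpermD (z := a)) ?tpermL // eq_sym.
have s1b : (s1^-1)%g b = b by rewrite s1V !(tpermD (z := b)) // eq_sym.
have s1m : (s1^-1)%g m = m by rewrite s1V !(tpermD (z := m)).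
have s2a : (s2^-1)%g a = a by rewrite s2V !(tpermD (z := a)) // eq_sym.
have s2b : (s2^-1)%g b = k by rewrite s2V (tpermD (z := b)) ?tpermL // eq_sym.
have s2m : (s2^-1)%g m = m by rewrite s2V !(tpermD (z := m)).
set y1 := conj_quot s1 A; set y2 := conj_quot s2 A.
have Hy1 : y1 \in H by exact: mem_conj_quot.
have Hy2 : y2 \in H by exact: mem_conj_quot.
have Hy12 : y1 *m y2 \in H by exact: mem_mulmx.
set z := invmx (y1 *m y2) *m A.
have Hz : z \in H by rewrite mem_mulmx ?mem_invmx.
have zE x : z x x = (y1 x x * y2 x x)^-1 * A x x
  by rewrite mulmx_ii ?mem_invmx // invmx_ii // mulmx_ii.
have -> : A = y1 *m y2 *m z by rewrite mulKVmx ?mem_unitmx.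
apply: mem_tperm_conj_mulmx; first apply: mem_tperm_conj_mulmx.
- apply: (@mem_tperm_conj_eq _ _ m) => //.
  by rewrite !conj_quot_fixed.
- rewrite tpermC; apply: (@mem_tperm_conj_eq _ _ m) => //; first by rewrite eq_sym.
  by rewrite !conj_quot_fixed.
rewrite perm_conj_tperm_id ?mem_diag // !zE !conj_quot_ii // s1a s1b s2a s2b.
by field; rewrite ?invr_eq0 !diag_neq0.
Qed.

End AltInvariantDiagonal.

Theorem proposition8p1 (R : realType) (p : nat) (Hp : prime p) (p5 : (5 <= p)%N)
  (H : seq 'M[R[i]]_p) :
  finite_subgroup_of_diag H ->
  (forall s : 'S_p, ~~ odd_perm s -> conj_invariant H s) ->
  forall s : 'S_p, conj_invariant H s.
Proof.
move=> H_sub H_alt s.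
have lt_p i : (i < 5)%N -> (i < p)%N := fun lt_i5 => leq_trans lt_i5 p5.
pose a := Ordinal (lt_p 0%N isT); pose b := Ordinal (lt_p 1%N isT).
pose k := Ordinal (lt_p 2%N isT); pose l := Ordinal (lt_p 3%N isT).
pose m := Ordinal (lt_p 4%N isT).
have [s_odd|s_even] := boolP (odd_perm s); last exact: H_alt.
move=> A HA; rewrite -/(perm_conj s A) -(mulKVg (tperm a b) s) -perm_conjM.
apply: (H_alt); first by rewrite odd_permM odd_permV odd_tperm s_odd.
by apply: (mem_tperm_conj H_sub H_alt (k := k) (l := l) (m := m) HA).
Qed.
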